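(* Let $f(v)=\frac12|v-1|$ (Total Variation), so $f^*(u)=u$ with $\mathrm{dom}(f^* )=[-\frac12,\frac12]$. In the binary noisy-label setting described in the context, $\mathrm{Bias}_f(h,g)$ is constant (in $h$ and $g$), and for any hypothesis space $\mathcal H$, $D_f(P_{h\times Y}\|Q_{h\times Y})$ is $\mathcal H$-robust with label noise.
   Context: $(X,Y)$ with $X\in\mathcal X$, $Y\in\{-1,+1\}$; noisy label $\tilde Y$ generated from $Y$, conditionally independently of $X$ given $Y$, with $e_+={\mathbb P}(\tilde Y=-1\mid Y=+1)$, $e_-={\mathbb P}(\tilde Y=+1\mid Y=-1)$, $e_++e_-<1$. A hypothesis space $\mathcal H$ is a set of classifiers $h:\mathcal X\to\{-1,+1\}$. $P_{h\times Y}(y,y')={\mathbb P}(h(X)=y,Y=y')$, $Q_{h\times Y}(y,y')={\mathbb P}(h(X)=y){\mathbb P}(Y=y')$, and $\tilde P_{h\times\tilde Y},\tilde Q_{h\times\tilde Y}$ the same with $\tilde Y$. $D_f(P\|Q)=\sum_z q(z)f(p(z)/q(z))$. For $g:\{-1,+1\}^2\to\mathrm{dom}(f^* )$, $\Delta^y_f(h,g)=\mathbb E_X[g(h(X),y)]-\mathbb E_X[f^*(g(h(X),y))]$ and $\mathrm{Bias}_f(h,g)=e_+\Delta^{-1}_f(h,g)+e_-\Delta^{+1}_f(h,g)$. With $h^*_f\in\arg\max_{h\in\mathcal H}D_f(P_{h\times Y}\|Q_{h\times Y})$, $D_f$ is $\mathcal H$-robust if $h^*_f=\arg\max_{h\in\mathcal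 H}D_f(\tilde P_{h\times\tilde Y}\|\tilde Q_{h\times\tilde Y})$. *)

(* Labels {-1,+1} are encoded as bool: true = +1, false = -1. *)
From HB Require Import structures.
From mathcomp Require Import all_boot all_order all_algebra.
From mathcomp Require Import all_classical all_reals all_analysis.
Set Implicit Arguments. Unset Strict Implicit. Unset Printing Implicit Defensive.
Import Order.TTheory GRing.Theory Num.Theory.
Local Open Scope classical_set_scope.
Local Open Scope ring_scope.

Section Defs.
Context {R : realType} {d : measure_display} {T : measurableType d}
        {dx : measure_display} {Xs : measurableType dx}.
Variable P : probability T R.

Definition prb (A : set T) : R := fine (P A).

(* P(Yn = yn | Y = y) (ratio; conventionally 0 if P(Y=y)=0) *)
Definition condprob (Y Yn : T -> bool) (yn y : bool) : R :=
  prb [set t | Yn t = yn /\ Y t = y] / prb [set t | Y t = y].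

Definition cond_indep (X : T -> Xs) (Y Yn : T -> bool) : Prop :=
  forall B : set Xs, measurable B -> forall y yn : bool,
    prb [set t | B (X t) /\ Y t = y /\ Yn t = yn] * prb [set t | Y t = y]
    = prb [set t | B (X t) /\ Y t = y] * prb [set t | Y t = y /\ Yn t = yn].

Definition Pjoint (X : T -> Xs) (Y : T -> bool) (h : Xs -> bool) (a y : bool) : R :=
  prb [set t | h (X t) = a /\ Y t = y].

Definition Qprod (X : T -> Xs) (Y : T -> bool) (h : Xs -> bool) (a y : bool) : R :=
  prb [set t | h (X t) = a] * prb [set t | Y t = y].

Definition Delta (fstar : R -> R) (X : T -> Xs) (h : Xs -> bool)
    (g : bool -> bool -> R) (y : bool) : \bar R :=
  (\int[P]_t (g (h (X t)) y)%:E - \int[P]_t (fstar (g (h (X t)) y))%:E)%E.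

Definition Bias (fstar : R -> R) (X : T -> Xs) (eplus eminus : R)
    (h : Xs -> bool) (g : bool -> bool -> R) : \bar R :=
  (eplus%:E * Delta fstar X h g false + eminus%:E * Delta fstar X h g true)%E.

End Defs.

Definition Df {R : realType} (f : R -> R) (p q : bool -> bool -> R) : R :=
  \sum_(a : bool) \sum_(y : bool) q a y * f (p a y / q a y).

Definition fTV {R : realType} (v : R) : R := 2^-1 * `|v - 1|.
Definition fTV_star {R : realType} (u : R) : R := u.
Definition in_dom_fTV_star {R : realType} (u : R) : Prop := - 2^-1 <= u <= 2^-1.

Definition is_argmax {A : Type} {R : realType} (H : set A) (F : A -> R) (h : A) : Prop :=
  H h /\ forall h', H h' -> F h' <= F h.

From HB Require Import structures.
From mathcomp Require Import all_boot all_order all_algebra.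
From mathcomp Require Import all_classical all_reals all_analysis.
From mathcomp Require Import ring lra.
Import Order.TTheory GRing.Theory Num.Theory.
Local Open Scope classical_set_scope.
Local Open Scope ring_scope.

(* Since f^* is the identity, each Delta^y_f(h, g) is E[g] - E[g] = 0, so the
   bias vanishes.  For robustness, the total variation between a 2x2 joint
   table p and the product of its marginals is 2 |det p|.  Conditional
   independence makes the noisy table the product of the clean one with the
   row-stochastic noise channel, whose determinant is 1 - e_+ - e_- > 0; so the
   noisy objective is a positive multiple of the clean one and both have the
   same maximizers over any H. *)

Section two_by_two_tables.
Context {R : realType}.
Implicit Types p al : bool -> bool -> R.

Definition det2 p := p true true * p false false - p true false * p false true.

Definition marginal_product p (a y : bool) :=
  (p a true + p a false) * (p true y + p false y).

Lemma det2_mul p al :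
  det2 (fun a c => p a true * al true c + p a false * al false c) =
  det2 p * det2 al.
Proof. by rewrite /det2; ring. Qed.

Lemma det2_stochastic al : (forall y, al y true + al y false = 1) ->
  det2 al = 1 - al true false - al false true.
Proof.
move=> row1.
have att : al true true = 1 - al true false by have := row1 true; lra.
have aff : al false false = 1 - al false true by have := row1 false; lra.
by rewrite /det2 att aff; ring.
Qed.

Lemma mulr_fTV (p q : R) : 0 <= q -> (q = 0 -> p = 0) ->
  q * fTV (p / q) = 2^-1 * `|p - q|.
Proof.
move=> q_ge0 q0_p0; have [q0|q_neq0] := eqVneq q 0.
  by rewrite q0 (q0_p0 q0) mul0r subrr normr0 mulr0.
rewrite /fTV mulrCA -{1}(ger0_norm q_ge0) -normrM; congr (_ * `|_|).
by field.
Qed.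

Lemma Df_fTV_marginal_product p : (forall a y, 0 <= p a y) ->
  p true true + p true false + p false true + p false false = 1 ->
  Df fTV p (marginal_product p) = 2 * `|det2 p|.
Proof.
move=> p_ge0 p_sum1.
have cell a y : marginal_product p a y * fTV (p a y / marginal_product p a y)
    = 2^-1 * `|det2 p|.
  have [p_le_row p_le_col] :
      p a y <= p a true + p a false /\ p a y <= p true y + p false y.
    by split; [case: y | case: a]; rewrite ?lerDl ?lerDr p_ge0.
  have row_ge0 := le_trans (p_ge0 a y) p_le_row.
  have col_ge0 := le_trans (p_ge0 a y) p_le_col.
  rewrite mulr_fTV; first last.
  - move/eqP; rewrite mulf_eq0 => /orP[] /eqP mp0; apply/le_anti.
      by rewrite p_ge0 -mp0 p_le_row.
    by rewrite p_ge0 -mp0 p_le_col.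
  - exact: mulr_ge0.
  have p00 : p false false = 1 - p true true - p true false - p false true.
    by rewrite -p_sum1; ring.
  congr (_ * _); rewrite /marginal_product /det2.
  by clear -p00; case: a; case: y; [|rewrite -normrN|rewrite -normrN|];
    congr `|_|; rewrite p00; ring.
by rewrite /Df !big_bool /= !cell; lra.
Qed.

Lemma is_argmax_scale {A : Type} (H : set A) {F G : A -> R} {c : R} :
  0 < c -> (forall h, H h -> G h = c * F h) ->
  forall h, is_argmax H F h <-> is_argmax H G h.
Proof.
move=> c_gt0 GE h; split=> -[Hh max_h]; split=> // h' Hh'.
  by rewrite !GE // ler_pM2l //; exact: max_h.
by rewrite -(ler_pM2l c_gt0) -!GE //; exact: max_h.
Qed.

End two_by_two_tables.

Lemma measurable_fun_bool_eq {d : measure_display} {T : measurableType d}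
    {k : T -> bool} :
  measurable_fun setT k -> forall b, measurable [set t | k t = b].
Proof. by move=> mk b; have := mk measurableT [set b] I; rewrite setTI. Qed.

Section probability_facts.
Context {R : realType} {d : measure_display} {T : measurableType d}.
Variable P : probability T R.

Lemma prb_ge0 (A : set T) : 0 <= prb P A.
Proof. exact/fine_ge0/measure_ge0. Qed.

Lemma prb_le (A B : set T) : measurable A -> measurable B -> A `<=` B ->
  prb P A <= prb P B.
Proof.
move=> mA mB AB; apply: fine_le; rewrite ?inE ?fin_num_measure //.
by apply: le_measure; rewrite ?inE.
Qed.

Lemma prb_split (A : set T) (Z : T -> bool) :
  measurable A -> measurable [set t | Z t = true] ->
  prb P A = prb P (A `&` [set t | Z t = true]) +
            prb P (A `&` [set t | Z t = false]).
Proof.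
move=> mA mZ; rewrite /prb (measureDI P mA mZ) addrC fineD ?inE
  ?fin_num_measure //; [|exact: measurableI|exact: measurableD].
rewrite setDE; congr (_ + fine (P (A `&` _))).
by apply/seteqP; split=> t /=; case: (Z t).
Qed.

Lemma integral_bool_fin_num (k : T -> bool) (g : bool -> R) :
  measurable_fun setT k -> (\int[P]_t (g (k t))%:E \is a fin_num)%E.
Proof.
move=> mk; apply: integrable_fin_num => //.
apply: measurable_bounded_integrable => //.
- by rewrite (le_lt_trans (probability_le1 P measurableT)) ?ltry.
- by apply: measurableT_comp mk => _ B _; rewrite setTI.
- exists (`|g true| + `|g false|); split; first by rewrite num_real.
  move=> M M_gt t _; apply: le_trans (ltW M_gt).
  by case: (k t); rewrite ?lerDl ?lerDr.
Qed.

End probability_facts.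

Section classifier_tables.
Context {R : realType} {d : measure_display} {T : measurableType d}
  {dx : measure_display} {Xs : measurableType dx}.
Variables (P : probability T R) (X : T -> Xs) (h : Xs -> bool).
Hypothesis mhX : measurable_fun setT (fun t => h (X t)).

Lemma Delta_fTV_star_eq0 (g : bool -> bool -> R) (y : bool) :
  Delta P fTV_star X h g y = 0%E.
Proof.
rewrite /Delta /fTV_star subee //.
exact: (integral_bool_fin_num P _ (fun b => g b y) mhX).
Qed.

Variable Z : T -> bool.
Hypothesis mZ : forall z, measurable [set t | Z t = z].

Lemma Qprod_marginal_product :
  Qprod P X Z h = marginal_product (Pjoint P X Z h).
Proof.
have mhXa := measurable_fun_bool_eq mhX.
apply/funext => a; apply/funext => z; rewrite /Qprod /marginal_product.
rewrite (prb_split P _ _ (mhXa a) (mZ true)).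
rewrite (prb_split P _ _ (mZ z) (mhXa true)).
by rewrite [_ `&` [set t | h (X t) = true]]setIC
  [_ `&` [set t | h (X t) = false]]setIC.
Qed.

Lemma Pjoint_sum1 : Pjoint P X Z h true true + Pjoint P X Z h true false +
  Pjoint P X Z h false true + Pjoint P X Z h false false = 1.
Proof.
have mhXa := measurable_fun_bool_eq mhX.
have total : prb P setT = 1 by rewrite /prb probability_setT.
rewrite -total (prb_split P _ _ measurableT (mhXa true)) !setTI.
rewrite (prb_split P _ _ (mhXa true) (mZ true)).
by rewrite (prb_split P _ _ (mhXa false) (mZ true)) !addrA.
Qed.

Lemma Df_fTV_Pjoint :
  Df fTV (Pjoint P X Z h) (Qprod P X Z h) = 2 * `|det2 (Pjoint P X Z h)|.
Proof.
rewrite Qprod_marginal_product Df_fTV_marginal_product ?Pjoint_sum1 //.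
by move=> a z; exact: prb_ge0.
Qed.

End classifier_tables.

Section noisy_labels.
Context {R : realType} {d : measure_display} {T : measurableType d}
  {dx : measure_display} {Xs : measurableType dx}.
Variables (P : probability T R) (X : T -> Xs) (Y Yn : T -> bool).
Hypotheses (mX : measurable_fun setT X)
  (mY : forall y, measurable [set t | Y t = y])
  (mYn : forall y, measurable [set t | Yn t = y])
  (indep : cond_indep P X Y Yn).

(* The noise channel y |-> P(Yn = yn | Y = y); on a null class [Y = y] the
   conditional probability is the junk value 0, so the channel is taken to be
   noiseless there to keep it row-stochastic. *)
Definition channel (y yn : bool) : R :=
  if prb P [set t | Y t = y] == 0 then (y == yn)%:R else condprob P Y Yn yn y.

Lemma channel_neq y yn : y != yn -> channel y yn = condprob P Y Yn yn y.
Proof.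
move=> y_neq_yn; rewrite /channel /condprob; case: eqP => [-> | //].
by rewrite (negbTE y_neq_yn) invr0 mulr0.
Qed.

Lemma channel_stochastic y : channel y true + channel y false = 1.
Proof.
rewrite /channel; case: eqP => [_ | /eqP pi_neq0].
  by case: y; rewrite /= ?addr0 ?add0r.
rewrite /condprob -mulrDl -[X in _ = X](divff pi_neq0); congr (_ / _).
rewrite (prb_split P _ _ (mY y) (mYn true)).
by congr (prb P _ + prb P _); apply/seteqP; split=> t [].
Qed.

Variable h : Xs -> bool.
Hypothesis mh : measurable_fun setT h.

Lemma prb_cell_channel a y yn :
  prb P [set t | h (X t) = a /\ Y t = y /\ Yn t = yn] =
  Pjoint P X Y h a y * channel y yn.
Proof.
have mhXa := measurable_fun_bool_eq (measurableT_comp mh mX).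
have mcell : measurable [set t | h (X t) = a /\ Y t = y /\ Yn t = yn].
  exact: measurableI _ _ (mhXa a) (measurableI _ _ (mY y) (mYn yn)).
have mjoint : measurable [set t | h (X t) = a /\ Y t = y].
  exact: measurableI _ _ (mhXa a) (mY y).
rewrite /channel; case: eqP => [pi0 | /eqP pi_neq0].
  have null B : measurable B -> B `<=` [set t | Y t = y] -> prb P B = 0.
    move=> mB BY; apply/le_anti; rewrite prb_ge0 -pi0 andbT.
    exact: prb_le.
  by rewrite /Pjoint !null ?mul0r // => t /=; tauto.
apply: (mulIf pi_neq0); rewrite (indep _ (measurable_fun_bool_eq mh a)).
rewrite /condprob -mulrA divfK //; congr (_ * prb P _).
by apply/seteqP; split=> t [].
Qed.

Lemma Pjoint_noisy a yn : Pjoint P X Yn h a yn =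
  Pjoint P X Y h a true * channel true yn +
  Pjoint P X Y h a false * channel false yn.
Proof.
have mhXa := measurable_fun_bool_eq (measurableT_comp mh mX).
rewrite /Pjoint (prb_split P _ _ (measurableI _ _ (mhXa a) (mYn yn)) (mY true)).
rewrite -!prb_cell_channel.
by congr (prb P _ + prb P _); apply/seteqP; split=> t /=; tauto.
Qed.

Lemma Df_fTV_noisy :
  Df fTV (Pjoint P X Yn h) (Qprod P X Yn h) =
  `|1 - condprob P Y Yn false true - condprob P Y Yn true false| *
  Df fTV (Pjoint P X Y h) (Qprod P X Y h).
Proof.
have mhX := measurableT_comp mh mX.
rewrite !Df_fTV_Pjoint //.
have -> : Pjoint P X Yn h =
    (fun a yn => Pjoint P X Y h a true * channel true yn +
                 Pjoint P X Y h a false * channel false yn).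
  by apply/funext => a; apply/funext => yn; exact: Pjoint_noisy.
rewrite det2_mul (det2_stochastic _ channel_stochastic).
by rewrite !channel_neq // normrM; ring.
Qed.

End noisy_labels.

Theorem theorem7 (R : realType) (d : measure_display) (T : measurableType d)
  (dx : measure_display) (Xs : measurableType dx) (P : probability T R)
  (X : T -> Xs) (Y Yn : T -> bool)
  (mX : measurable_fun setT X)
  (mY : forall y : bool, measurable [set t | Y t = y])
  (mYn : forall y : bool, measurable [set t | Yn t = y])
  (indep : cond_indep P X Y Yn)
  (noise : condprob P Y Yn false true + condprob P Y Yn true false < 1) :
  let eplus := condprob P Y Yn false true in
  let eminus := condprob P Y Yn true false in
  (* Bias_f is constant in h and g *)
  (exists c : \bar R, forall (h : Xs -> bool) (g : bool -> bool -> R),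
      measurable_fun setT h ->
      (forall a y, in_dom_fTV_star (g a y)) ->
      Bias P fTV_star X eplus eminus h g = c) /\
  (* D_f is H-robust for every hypothesis space H *)
  (forall H : set (Xs -> bool), (forall h, H h -> measurable_fun setT h) ->
     forall h : Xs -> bool,
       is_argmax H (fun h => Df fTV (Pjoint P X Y h) (Qprod P X Y h)) h <->
       is_argmax H (fun h => Df fTV (Pjoint P X Yn h) (Qprod P X Yn h)) h).
Proof.
move=> eplus eminus; split.
  exists 0%E => h g mh _; have mhX := measurableT_comp mh mX.
  by rewrite /Bias !Delta_fTV_star_eq0 // !mule0 adde0.
move=> H mH.
have noise_gap : 0 < 1 - eplus - eminus by rewrite /eplus /eminus; lra.
apply: (is_argmax_scale H noise_gap) => h Hh.
rewrite (Df_fTV_noisy _ _ Y) ?(gtr0_norm noise_gap) //; exact: mH.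
Qed.
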